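(* Let $p,q,n,d$ be positive integers with $p\le n$ and $q\ge n+d-p$. Let $A\in\mathbb{R}^{q\times n}$, $B\in\mathbb{R}^{q\times d}$, $C\in\mathbb{R}^{p\times n}$ of full row rank and $D\in\mathbb{R}^{p\times d}$. Set $\widetilde A=[A\ \ B]$, $\widetilde C=[C\ \ D]$. Let $\widetilde Q=[\widetilde Q_1\ \ \widetilde Q_2]$ be an orthogonal matrix of order $n+d$ with $\widetilde Q_1\in\mathbb{R}^{(n+d)\times p}$ and $\mathcal{R}(\widetilde Q_1)=\mathcal{R}(\widetilde C^T)$ (e.g. obtained from a QR factorization $\widetilde C^T=\widetilde Q\begin{bmatrix}\widetilde R_1\\ 0\end{bmatrix}$), so that the columns of $\widetilde Q_2\in\mathbb{R}^{(n+d)\times(n+d-p)}$ are an orthonormal basis of the null space of $\widetilde C$. Let $\widetilde A\widetilde Q_2=\widetilde U\widetilde\Sigma\widetilde V^T$ be a thin SVD, with $\widetilde U\in\mathbb{R}^{q\times(n+d-p)}$ having orthonormal columns, $\widetilde V$ orthogonal of order $n+d-p$, and $\widetilde\Sigma=\mathrm{diag}(\widetilde\sigma_1,\dots,\widetilde\sigma_{n+d-p})$, $\widetilde\sigma_1\ge\cdots\ge\widetilde\sigma_{n+d-p}\ge 0$. Let $k=n-p$, and write $\widetilde U=[\widetilde U_1\ \ \widetilde U_2]$, $\widetilde V=[\widetilde V_1\ \ \widetilde V_2]$ where $\widetilde U_1,\widetilde V_1$ consist of the first $k$ columns, and $\widetilde\Sigma_1=\mathrm{diag}(\widetilde\sigma_1,\dots,\widetilde\sigma_k)$.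 Put $\overline V_1=\widetilde Q_2\widetilde V_1=\begin{bmatrix}\overline V_{11}\\ \overline V_{21}\end{bmatrix}$ and $\overline V_2=\widetilde Q_2\widetilde V_2=\begin{bmatrix}\overline V_{12}\\ \overline V_{22}\end{bmatrix}$ with $\overline V_{11}\in\mathbb{R}^{n\times k}$, $\overline V_{21}\in\mathbb{R}^{d\times k}$, $\overline V_{12}\in\mathbb{R}^{n\times d}$, $\overline V_{22}\in\mathbb{R}^{d\times d}$. Assume $\widetilde\sigma_{n-p}>\widetilde\sigma_{n-p+1}$ (void if $n=p$) and that $\overline V_{22}$ is nonsingular. Then the TLSE problem has a unique TLSE solution, namely $X_n=-\overline V_{12}\overline V_{22}^{-1}$, and $X_n$ is also the solution of the consistent linear system $\widehat AX=\widehat B$, $CX=D$, where $\widehat A=\widetilde U_1\widetilde\Sigma_1\overline V_{11}^T$ and $\widehat B=\widetilde U_1\widetilde\Sigma_1\overline V_{21}^T$.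
   Context: The multidimensional total least squares problem with linear equality constraint (TLSE) is: minimize $\|[E\ \ F]\|_F$ over $E\in\mathbb{R}^{q\times n}$, $F\in\mathbb{R}^{q\times d}$ subject to the existence of $X\in\mathbb{R}^{n\times d}$ with $(A+E)X=B+F$ and $CX=D$. A TLSE solution is a matrix $X\in\mathbb{R}^{n\times d}$ with $CX=D$ and $(A+E)X=B+F$ for some minimizing pair $(E,F)$. $\mathcal R(\cdot)$ denotes column space. *)

From HB Require Import structures.
From mathcomp Require Import all_boot all_order all_algebra.
From mathcomp Require Import reals.
Set Implicit Arguments. Unset Strict Implicit. Unset Printing Implicit Defensive.
Import Order.TTheory GRing.Theory Num.Theory.
Local Open Scope ring_scope.

Definition frob_norm (R : rcfType) (m n : nat) (M : 'M[R]_(m, n)) : R :=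
  Num.sqrt (\sum_(i < m) \sum_(j < n) M i j ^+ 2).

Definition tlse_feasible (R : rcfType) (q n d p : nat)
  (A : 'M[R]_(q, n)) (B : 'M[R]_(q, d)) (C : 'M[R]_(p, n)) (D : 'M[R]_(p, d))
  (E : 'M[R]_(q, n)) (F : 'M[R]_(q, d)) : Prop :=
  exists X : 'M[R]_(n, d), (A + E) *m X = B + F /\ C *m X = D.

Definition tlse_minimizer (R : rcfType) (q n d p : nat)
  (A : 'M[R]_(q, n)) (B : 'M[R]_(q, d)) (C : 'M[R]_(p, n)) (D : 'M[R]_(p, d))
  (E : 'M[R]_(q, n)) (F : 'M[R]_(q, d)) : Prop :=
  tlse_feasible A B C D E F /\
  forall (E' : 'M[R]_(q, n)) (F' : 'M[R]_(q, d)),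
    tlse_feasible A B C D E' F' ->
    frob_norm (row_mx E F) <= frob_norm (row_mx E' F').

Definition tlse_solution (R : rcfType) (q n d p : nat)
  (A : 'M[R]_(q, n)) (B : 'M[R]_(q, d)) (C : 'M[R]_(p, n)) (D : 'M[R]_(p, d))
  (X : 'M[R]_(n, d)) : Prop :=
  C *m X = D /\
  exists (E : 'M[R]_(q, n)) (F : 'M[R]_(q, d)),
    tlse_minimizer A B C D E F /\ (A + E) *m X = B + F.

From HB Require Import structures.
From mathcomp Require Import all_boot all_order all_algebra.
From mathcomp Require Import reals.
From mathcomp Require Import ring lra.
Import Order.TTheory GRing.Theory Num.Theory.
Local Open Scope ring_scope.

(* Write Z = [X; -I].  The constraint CX = D says that Z lies in the range of
   Q2, and (E, F) is feasible for X iff ([A B] + [E F]) Z = 0.  If P is the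
   orthogonal projector onto the columns of Z, then [E F] P = - [A B] P, so
   ||[E F]||^2 >= ||[A B] P||^2 = sum_i s_i^2 h_i, where the h_i are the
   diagonal entries of the rank-d projector (P Q2 V)^T (P Q2 V): they lie in
   [0, 1] and sum to d.  Hence ||[E F]||^2 >= s_(k+1)^2 + ... + s_(k+d)^2, a
   bound attained at X_n by [E F] = - [A B] V2bar V2bar^T.  Because of the gap
   s_k > s_(k+1), equality forces h_1 = ... = h_k = 0, i.e. V1bar^T Z = 0, and
   together with CX = D this determines X = X_n.  Since U1 Sigma1 is injective,
   V1bar^T Z = 0 is also equivalent to Ahat X = Bhat. *)

Lemma mxtrace_mul_trmx {R : pzRingType} {m n : nat} (M : 'M[R]_(m, n)) :
  \tr (M *m M^T) = \sum_i \sum_j M i j ^+ 2.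
Proof.
apply: eq_bigr => i _; rewrite !mxE.
by apply: eq_bigr => j _; rewrite !mxE expr2.
Qed.

Lemma mxtrace_mul_trmx_ge0 {R : realDomainType} {m n : nat} (M : 'M[R]_(m, n)) :
  0 <= \tr (M *m M^T).
Proof.
rewrite mxtrace_mul_trmx.
by apply: sumr_ge0 => i _; apply: sumr_ge0 => j _; apply: sqr_ge0.
Qed.

Lemma mxtrace_mul_trmx_eq0 {R : realDomainType} {m n : nat} (M : 'M[R]_(m, n)) :
  \tr (M *m M^T) = 0 -> M = 0.
Proof.
rewrite mxtrace_mul_trmx => sum0; apply/matrixP => i j; rewrite mxE.
have row_ge0 i' : 0 <= \sum_j' M i' j' ^+ 2 by apply: sumr_ge0 => j' _; apply: sqr_ge0.
have row0 := psumr_eq0P (fun i' _ => row_ge0 i') sum0 (i := i) isT.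
have := psumr_eq0P (fun j' _ => sqr_ge0 (M i j')) row0 (i := j) isT.
by move/eqP; rewrite sqrf_eq0 => /eqP.
Qed.

Lemma frob_normE {R : rcfType} {m n : nat} (M : 'M[R]_(m, n)) :
  frob_norm M = Num.sqrt (\tr (M *m M^T)).
Proof. by rewrite /frob_norm mxtrace_mul_trmx. Qed.

Lemma mul_hsub_trmx {R : pzRingType} {m n1 n2 : nat} (Q : 'M[R]_(m, n1 + n2)) :
  Q *m Q^T = lsubmx Q *m (lsubmx Q)^T + rsubmx Q *m (rsubmx Q)^T.
Proof. by rewrite -[in LHS](hsubmxK Q) tr_row_mx mul_row_col. Qed.

Section OrthonormalColumns.
Context {R : pzRingType} {m n1 n2 : nat} {Q : 'M[R]_(m, n1 + n2)}.
Hypothesis QTQ : Q^T *m Q = 1%:M.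

Let QTQ_blocks :
  block_mx ((lsubmx Q)^T *m lsubmx Q) ((lsubmx Q)^T *m rsubmx Q)
           ((rsubmx Q)^T *m lsubmx Q) ((rsubmx Q)^T *m rsubmx Q) =
  block_mx 1%:M 0 0 1%:M.
Proof. by rewrite -mul_col_row -tr_row_mx hsubmxK QTQ -scalar_mx_block. Qed.

Lemma lsubmx_orthonormal : (lsubmx Q)^T *m lsubmx Q = 1%:M.
Proof. by case/eq_block_mx: QTQ_blocks. Qed.

Lemma rsubmx_orthonormal : (rsubmx Q)^T *m rsubmx Q = 1%:M.
Proof. by case/eq_block_mx: QTQ_blocks. Qed.

Lemma lsubmx_orth_rsubmx : (lsubmx Q)^T *m rsubmx Q = 0.
Proof. by case/eq_block_mx: QTQ_blocks. Qed.

End OrthonormalColumns.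

Lemma gram_diag {R : comPzRingType} {m n : nat} (Y : 'M[R]_(m, n)) i :
  (Y^T *m Y) i i = \sum_l Y l i ^+ 2.
Proof. by rewrite mxE; apply: eq_bigr => l _; rewrite mxE expr2. Qed.

Lemma gram_diag_eq0 {R : realDomainType} {m n : nat} (Y : 'M[R]_(m, n)) i :
  (Y^T *m Y) i i = 0 -> forall l, Y l i = 0.
Proof.
rewrite gram_diag => sum0 l.
have := psumr_eq0P (fun l' _ => sqr_ge0 (Y l' i)) sum0 (i := l) isT.
by move/eqP; rewrite sqrf_eq0 => /eqP.
Qed.

Lemma svd_mxtrace_mul_trmx {R : comPzRingType} {q m N : nat}
    (U : 'M[R]_(q, m)) (s : 'rV[R]_m) (W : 'M[R]_(N, m)) :
  U^T *m U = 1%:M ->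
  \tr ((U *m diag_mx s *m W^T) *m (U *m diag_mx s *m W^T)^T) =
  \sum_i s 0 i ^+ 2 * (W^T *m W) i i.
Proof.
move=> UTU; rewrite !trmx_mul trmxK tr_diag_mx.
rewrite -!mulmxA mxtrace_mulC -!mulmxA UTU mulmx1 !mulmxA -(mulmxA (diag_mx s)).
apply: eq_bigr => i _.
by rewrite mul_mx_diag mxE mul_diag_mx !mxE; ring.
Qed.

Section SymmetricIdempotent.
Context {R : realFieldType} {m : nat} {P : 'M[R]_m}.
Hypotheses (P_sym : P^T = P) (P_idem : P *m P = P).

Lemma sym_idem_diagE i : P i i = \sum_j P i j ^+ 2.
Proof.
by rewrite -{1}P_idem -{1}P_sym gram_diag; apply: eq_bigr => j _; rewrite -{1}P_sym mxE.
Qed.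

Lemma sym_idem_diag_ge0 i : 0 <= P i i.
Proof. by rewrite sym_idem_diagE; apply: sumr_ge0 => j _; apply: sqr_ge0. Qed.

Lemma sym_idem_diag_le1 i : P i i <= 1.
Proof.
have : P i i ^+ 2 <= P i i.
  rewrite [leRHS]sym_idem_diagE (bigD1 i) //= lerDl.
  by apply: sumr_ge0 => j _; apply: sqr_ge0.
have := sym_idem_diag_ge0 i; nra.
Qed.

Lemma mxtrace_mul_trmx_proj_split {n} (E : 'M[R]_(n, m)) :
  \tr (E *m E^T) =
  \tr ((E *m P) *m (E *m P)^T) + \tr ((E *m (1%:M - P)) *m (E *m (1%:M - P))^T).
Proof.
have sq N : (E *m N) *m (E *m N)^T = E *m (N *m N^T) *m E^T by rewrite trmx_mul !mulmxA.
have coP : (1%:M - P) *m (1%:M - P)^T = 1%:M - P.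
  by rewrite linearB /= trmx1 P_sym mulmxBl !mulmxBr !mul1mx mulmx1 P_idem subrr subr0.
by rewrite !sq coP P_sym P_idem -mxtraceD -mulmxDl -mulmxDr addrC subrK mulmx1.
Qed.

End SymmetricIdempotent.

Lemma partial_isometry_gram_idem {R : pzRingType} {m n : nat} (Y : 'M[R]_(m, n)) :
  Y *m Y^T *m Y = Y -> (Y^T *m Y) *m (Y^T *m Y) = Y^T *m Y.
Proof. by move=> YYTY; rewrite -!mulmxA [Y *m (Y^T *m Y)]mulmxA YYTY. Qed.

Lemma gram_unitmx {R : realFieldType} {m n : nat} (Z : 'M[R]_(m, n)) :
  row_free Z^T -> Z^T *m Z \in unitmx.
Proof.
move=> freeZT; rewrite -row_free_unit; apply: inj_row_free => v vG0.
apply: (row_free_inj freeZT); rewrite mul0mx; apply: mxtrace_mul_trmx_eq0.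
by rewrite trmx_mul trmxK mulmxA -(mulmxA v) vG0 mul0mx linear0.
Qed.

Lemma row_free_trmx_col_mxN1 {R : fieldType} {n d : nat} (X : 'M[R]_(n, d)) :
  row_free (col_mx X (-1))^T.
Proof.
apply: inj_row_free => v; rewrite tr_col_mx mul_mx_row -row_mx0 => /eq_row_mx[_].
by rewrite linearN /= trmx1 mulmxN mulmx1 => /eqP; rewrite oppr_eq0 => /eqP.
Qed.

Definition colproj {R : fieldType} {m n : nat} (Z : 'M[R]_(m, n)) : 'M[R]_m :=
  Z *m invmx (Z^T *m Z) *m Z^T.

Section ColumnProjector.
Context {R : fieldType} {m n : nat} {Z : 'M[R]_(m, n)}.
Hypothesis gram_unit : Z^T *m Z \in unitmx.

Lemma colproj_sym : (colproj Z)^T = colproj Z.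
Proof.
by rewrite /colproj !trmx_mul trmxK trmx_inv trmx_mul trmxK mulmxA.
Qed.

Lemma colproj_mul : colproj Z *m Z = Z.
Proof. by rewrite /colproj -!mulmxA mulVmx // mulmx1. Qed.

Lemma colproj_idem : colproj Z *m colproj Z = colproj Z.
Proof. by rewrite {1}/colproj !mulmxA colproj_mul. Qed.

Lemma mxtrace_colproj : \tr (colproj Z) = n%:R.
Proof. by rewrite /colproj -mulmxA mxtrace_mulC -mulmxA mulVmx // mxtrace1. Qed.

End ColumnProjector.

Lemma sum_diag_rsubmx1 {R : comPzRingType} {k d : nat} (f : 'I_(k + d) -> R) :
  \sum_i f i * (rsubmx (1%:M : 'M[R]_(k + d)) *m (rsubmx 1%:M)^T) i i =
  \sum_(j < d) f (rshift k j).
Proof.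
rewrite big_split_ord /= big1 ?add0r => [|i _].
  apply: eq_bigr => i _; rewrite mxE (bigD1 i) //= big1 ?addr0 => [|j /negbTE nij].
    by rewrite !mxE eqxx !mulr1.
  by rewrite !mxE eq_rshift eq_sym nij mulr0.
by rewrite mxE big1 ?mulr0 // => j _; rewrite !mxE eq_lrshift mul0r.
Qed.

Section WeightedTailSum.
Context {R : realFieldType} {k d : nat} (a h : 'I_(k + d) -> R) (t : R).
Hypotheses (h_ge0 : forall i, 0 <= h i) (h_le1 : forall i, h i <= 1).
Hypothesis h_sum : \sum_i h i = d%:R.
Hypothesis a_tail_le : forall j, a (rshift k j) <= t.

Lemma weighted_sum_subr_tail :
  \sum_i a i * h i - \sum_(j < d) a (rshift k j) =
  \sum_(i < k) (a (lshift d i) - t) * h (lshift d i) +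
  \sum_(j < d) (t - a (rshift k j)) * (1 - h (rshift k j)).
Proof.
have head : \sum_(i < k) (a (lshift d i) - t) * h (lshift d i) =
    \sum_(i < k) a (lshift d i) * h (lshift d i) - t * \sum_(i < k) h (lshift d i).
  by rewrite mulr_sumr -sumrB; apply: eq_bigr => i _; ring.
have tail : \sum_(j < d) (t - a (rshift k j)) * (1 - h (rshift k j)) =
    t * d%:R - t * \sum_(j < d) h (rshift k j) - \sum_(j < d) a (rshift k j) +
    \sum_(j < d) a (rshift k j) * h (rshift k j).
  rewrite -[d in t * d%:R]card_ord -sumr_const !mulr_sumr -!sumrB -big_split /=.
  by apply: eq_bigr => j _; ring.
move: h_sum; rewrite big_split_ord /= => sum_split.
by rewrite head tail big_split_ord /= -sum_split; ring.
Qed.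

Lemma weighted_sum_ge_tail :
  (forall i, t <= a (lshift d i)) ->
  \sum_(j < d) a (rshift k j) <= \sum_i a i * h i.
Proof.
move=> a_head_ge; rewrite -subr_ge0 weighted_sum_subr_tail.
apply: addr_ge0; apply: sumr_ge0 => i _; apply: mulr_ge0;
  by rewrite ?subr_ge0 ?a_head_ge ?a_tail_le ?h_ge0 ?h_le1.
Qed.

Lemma weighted_sum_eq_tail_head0 :
  (forall i, t < a (lshift d i)) ->
  \sum_i a i * h i = \sum_(j < d) a (rshift k j) -> forall i, h (lshift d i) = 0.
Proof.
move=> a_head_gt sum_eq i.
have head_ge0 i' : 0 <= (a (lshift d i') - t) * h (lshift d i').
  by rewrite mulr_ge0 // subr_ge0 ltW.
have tail_ge0 j : 0 <= (t - a (rshift k j)) * (1 - h (rshift k j)).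
  by rewrite mulr_ge0 // subr_ge0.
move/eqP: sum_eq; rewrite -subr_eq0 weighted_sum_subr_tail.
rewrite paddr_eq0 ?sumr_ge0 // => /andP[/eqP head0 _].
move: (psumr_eq0P (fun i' _ => head_ge0 i') head0 (i := i) isT) => /eqP.
by rewrite mulf_eq0 subr_eq0 gt_eqF ?a_head_gt //= => /eqP.
Qed.

End WeightedTailSum.

Lemma mul_row_col_mxN1 {R : pzRingType} {q n d : nat}
    (M1 : 'M[R]_(q, n)) (M2 : 'M[R]_(q, d)) (X : 'M[R]_(n, d)) :
  row_mx M1 M2 *m col_mx X (-1) = M1 *m X - M2.
Proof. by rewrite mul_row_col mulmxN mulmx1. Qed.

Lemma mul_row_col_mxN1_eq0 {R : pzRingType} {q n d : nat}
    (M1 : 'M[R]_(q, n)) (M2 : 'M[R]_(q, d)) (X : 'M[R]_(n, d)) :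
  M1 *m X = M2 <-> row_mx M1 M2 *m col_mx X (-1) = 0.
Proof.
rewrite mul_row_col_mxN1; split=> [->|/eqP]; first exact: subrr.
by rewrite subr_eq0 => /eqP.
Qed.

Lemma trmx_mul_col_mxN1 {R : comPzRingType} {n d r : nat}
    (M : 'M[R]_(n + d, r)) (X : 'M[R]_(n, d)) :
  M^T *m col_mx X (-1) = (usubmx M)^T *m X - (dsubmx M)^T.
Proof. by rewrite -{1}[M]vsubmxK tr_col_mx mul_row_col_mxN1. Qed.

Lemma orthonormal_diag_mul_eq0 {R : fieldType} {q m r : nat}
    (U : 'M[R]_(q, m)) (s : 'rV[R]_m) (W : 'M[R]_(m, r)) :
  U^T *m U = 1%:M -> (forall i, s 0 i != 0) -> U *m diag_mx s *m W = 0 -> W = 0.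
Proof.
move=> UTU s_neq0 UsW0.
have sW0 : diag_mx s *m W = 0.
  by rewrite -[LHS]mul1mx -UTU -mulmxA [U *m _]mulmxA UsW0 mulmx0.
apply/matrixP => i j; move/matrixP: sW0 => /(_ i j).
by rewrite mul_diag_mx !mxE => /eqP; rewrite mulf_eq0 (negbTE (s_neq0 i)) => /eqP.
Qed.

Section TotalLeastSquaresEquality.
Context {R : rcfType} {p q n d k : nat}.
Context {A : 'M[R]_(q, n)} {B : 'M[R]_(q, d)} {C : 'M[R]_(p, n)} {D : 'M[R]_(p, d)}.
Context {Qt : 'M[R]_(n + d, p + (k + d))} {U : 'M[R]_(q, k + d)}.
Context {s : 'rV[R]_(k + d)} {V : 'M[R]_(k + d)}.
Hypothesis d_gt0 : (0 < d)%N.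
Hypotheses (QtTQt : Qt^T *m Qt = 1%:M) (QtQtT : Qt *m Qt^T = 1%:M).
Hypothesis Q1_span : ((lsubmx Qt)^T == row_mx C D)%MS.
Hypothesis svd : row_mx A B *m rsubmx Qt = U *m diag_mx s *m V^T.
Hypotheses (UTU : U^T *m U = 1%:M) (VTV : V^T *m V = 1%:M) (VVT : V *m V^T = 1%:M).
Hypothesis s_decr : forall i j : 'I_(k + d), (i <= j)%N -> s 0 j <= s 0 i.
Hypothesis s_ge0 : forall i : 'I_(k + d), 0 <= s 0 i.
Hypothesis s_gap : forall i j : 'I_(k + d), (0 < k)%N ->
  nat_of_ord i = k.-1 -> nat_of_ord j = k -> s 0 j < s 0 i.

Local Notation At := (row_mx A B).
Local Notation Q2 := (rsubmx Qt).
Local Notation V1bar := (rsubmx Qt *m lsubmx V).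
Local Notation V2bar := (rsubmx Qt *m rsubmx V).
Local Notation augm X := (col_mx X (-1)).

Hypothesis V22_unit : dsubmx V2bar \in unitmx.

Local Notation Xn := (- (usubmx V2bar *m invmx (dsubmx V2bar))).

Lemma mul_CD_Q2 : row_mx C D *m Q2 = 0.
Proof.
have /andP[_ /submxP[K ->]] := Q1_span.
by rewrite -mulmxA lsubmx_orth_rsubmx // mulmx0.
Qed.

Lemma constraint_Q2_range X : C *m X = D -> Q2 *m Q2^T *m augm X = augm X.
Proof.
move=> CX; have Q1T_augm : (lsubmx Qt)^T *m augm X = 0.
  have /andP[/submxP[K ->] _] := Q1_span.
  by rewrite -mulmxA (proj1 (mul_row_col_mxN1_eq0 _ _ _) CX) mulmx0.
rewrite -[RHS]mul1mx -QtQtT [Qt *m _]mul_hsub_trmx mulmxDl.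
by rewrite -[lsubmx Qt *m _ *m _]mulmxA Q1T_augm mulmx0 add0r.
Qed.

Lemma Q2_proj_split : Q2 *m Q2^T = V1bar *m V1bar^T + V2bar *m V2bar^T.
Proof.
by rewrite !trmx_mul !mulmxA -mulmxDl -!mulmxA -mulmxDr -mul_hsub_trmx VVT mulmx1.
Qed.

Lemma V2barT_V2bar : V2bar^T *m V2bar = 1%:M.
Proof.
rewrite trmx_mul -mulmxA (mulmxA Q2^T) rsubmx_orthonormal // mul1mx.
exact: rsubmx_orthonormal.
Qed.

Lemma augm_Xn : augm Xn = V2bar *m - invmx (dsubmx V2bar).
Proof.
rewrite -[RHS]vsubmxK; congr col_mx; first by rewrite mulmxN mul_usub_mx linearN.
by rewrite -(mul_dsub_mx V2bar) mulmxN mulmxV.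
Qed.

Lemma C_Xn : C *m Xn = D.
Proof.
by apply/mul_row_col_mxN1_eq0; rewrite augm_Xn !mulmxA mul_CD_Q2 !mul0mx.
Qed.

Lemma V1barT_augm_Xn : V1bar^T *m augm Xn = 0.
Proof.
rewrite augm_Xn trmx_mul -!mulmxA (mulmxA Q2^T) rsubmx_orthonormal // mul1mx.
by rewrite mulmxA lsubmx_orth_rsubmx // mul0mx.
Qed.

Lemma constraint_V1bar_eq_Xn X : C *m X = D -> V1bar^T *m augm X = 0 -> X = Xn.
Proof.
move=> CX V1barX.
have V2bar_solves : V2bar *m (V2bar^T *m augm X) = augm X.
  rewrite -[RHS](constraint_Q2_range X CX) Q2_proj_split mulmxDl -!mulmxA.
  by rewrite V1barX !mulmx0 add0r.
set G := V2bar^T *m augm X in V2bar_solves.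
have XE : usubmx V2bar *m G = X by rewrite mul_usub_mx V2bar_solves col_mxKu.
have GE : dsubmx V2bar *m G = -1 by rewrite mul_dsub_mx V2bar_solves col_mxKd.
have G_inv : G = - invmx (dsubmx V2bar).
  by rewrite -[G]mul1mx -(mulVmx V22_unit) -mulmxA GE mulmxN mulmx1.
by rewrite -XE G_inv mulmxN.
Qed.

(* The 0-based index of s_(k+1). *)
Local Notation j0 := (rshift k (Ordinal d_gt0)).

Lemma s_tail_le j : s 0 (rshift k j) ^+ 2 <= s 0 j0 ^+ 2.
Proof. by rewrite ler_sqr ?nnegrE // s_decr //= leq_add2l. Qed.

Lemma s_head_gt i : s 0 j0 ^+ 2 < s 0 (lshift d i) ^+ 2.
Proof.
have k_gt0 : (0 < k)%N by apply: leq_ltn_trans (ltn_ord i).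
have km1_lt : (k.-1 < k + d)%N by rewrite (leq_trans _ (leq_addr d k)) // prednK.
have gap := s_gap (Ordinal km1_lt) j0 k_gt0 erefl (addn0 k).
have : s 0 (Ordinal km1_lt) <= s 0 (lshift d i) by apply: s_decr; rewrite /= -ltnS prednK.
by rewrite ltr_sqr ?nnegrE //; apply: lt_le_trans.
Qed.

Lemma s_head_gt0 i : 0 < s 0 (lshift d i).
Proof.
rewrite lt_def s_ge0 andbT; apply: contraTneq (s_head_gt i) => ->.
by rewrite expr0n /= -leNgt sqr_ge0.
Qed.

Local Notation Ahat := (lsubmx U *m diag_mx (lsubmx s) *m (usubmx V1bar)^T).
Local Notation Bhat := (lsubmx U *m diag_mx (lsubmx s) *m (dsubmx V1bar)^T).

Lemma Ahat_system_iff X : (Ahat *m X = Bhat /\ C *m X = D) <-> X = Xn.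
Proof.
have residual Y :
    Ahat *m Y - Bhat = lsubmx U *m diag_mx (lsubmx s) *m (V1bar^T *m augm Y).
  by rewrite trmx_mul_col_mxN1 mulmxBr !mulmxA.
split=> [[AX CX] | ->].
  apply: constraint_V1bar_eq_Xn CX _.
  have U1S1W0 : lsubmx U *m diag_mx (lsubmx s) *m (V1bar^T *m augm X) = 0.
    by rewrite -residual AX subrr.
  apply: (orthonormal_diag_mul_eq0 _ _ _ (lsubmx_orthonormal UTU) _ U1S1W0) => i.
  by rewrite mxE gt_eqF ?s_head_gt0.
split; last exact: C_Xn.
by apply/eqP; rewrite -subr_eq0 residual V1barT_augm_Xn mulmx0.
Qed.

Local Notation S2 := (\sum_(j < d) s 0 (rshift k j) ^+ 2).

Lemma mxtrace_At_proj (P : 'M[R]_(n + d)) : P^T = P -> Q2 *m Q2^T *m P = P ->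
  let Y := P *m Q2 *m V in
  \tr ((At *m P) *m (At *m P)^T) = \sum_i s 0 i ^+ 2 * (Y^T *m Y) i i.
Proof.
move=> P_sym Q2P Y.
have -> : At *m P = U *m diag_mx s *m Y^T.
  by rewrite -Q2P !mulmxA svd /Y !trmx_mul P_sym !mulmxA.
exact: svd_mxtrace_mul_trmx.
Qed.

Lemma proj_Q2_V_partial_isometry (P : 'M[R]_(n + d)) :
  P^T = P -> P *m P = P -> Q2 *m Q2^T *m P = P ->
  (P *m Q2 *m V) *m (P *m Q2 *m V)^T = P.
Proof.
move=> P_sym P_idem Q2P.
rewrite !trmx_mul P_sym !mulmxA -[P *m Q2 *m V *m V^T]mulmxA VVT mulmx1.
by rewrite -!mulmxA [Q2 *m (Q2^T *m P)]mulmxA Q2P P_idem.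
Qed.

Lemma At_proj_lower_bound (P : 'M[R]_(n + d)) :
  P^T = P -> P *m P = P -> \tr P = d%:R -> Q2 *m Q2^T *m P = P ->
  S2 <= \tr ((At *m P) *m (At *m P)^T) /\
  (\tr ((At *m P) *m (At *m P)^T) = S2 -> P *m V1bar = 0).
Proof.
move=> P_sym P_idem P_tr Q2P; rewrite (mxtrace_At_proj P P_sym Q2P).
set Y := P *m Q2 *m V; set H := Y^T *m Y.
have YYT : Y *m Y^T = P := proj_Q2_V_partial_isometry P P_sym P_idem Q2P.
have H_sym : H^T = H by rewrite /H trmx_mul trmxK.
have H_idem : H *m H = H.
  apply: partial_isometry_gram_idem.
  by rewrite YYT /Y [P *m (_ *m V)]mulmxA [P *m (P *m Q2)]mulmxA P_idem.
have H_tr : \tr H = d%:R by rewrite /H mxtrace_mulC YYT.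
have H_ge0 := sym_idem_diag_ge0 H_sym H_idem.
have H_le1 := sym_idem_diag_le1 H_sym H_idem.
split=> [|sum_eq].
  exact: (weighted_sum_ge_tail _ _ _ H_ge0 H_le1 H_tr s_tail_le
    (fun i => ltW (s_head_gt i))).
have H_head0 :=
  weighted_sum_eq_tail_head0 _ _ _ H_ge0 H_le1 H_tr s_tail_le s_head_gt sum_eq.
rewrite mulmxA mulmx_lsub -/Y; apply/matrixP => l i.
by rewrite [LHS]mxE [RHS]mxE (gram_diag_eq0 Y _ (H_head0 i)).
Qed.

Lemma tlse_lower_bound (E : 'M[R]_(q, n)) (F : 'M[R]_(q, d)) (X : 'M[R]_(n, d)) :
  (A + E) *m X = B + F -> C *m X = D ->
  S2 <= \tr (row_mx E F *m (row_mx E F)^T) /\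
  (\tr (row_mx E F *m (row_mx E F)^T) = S2 -> X = Xn).
Proof.
move=> feas CX; set Et := row_mx E F.
have Et_augm : Et *m augm X = - (At *m augm X).
  apply/eqP; rewrite -addr_eq0 addrC -mulmxDl add_row_mx.
  exact/eqP/(mul_row_col_mxN1_eq0 _ _ _).1.
have G_unit := gram_unitmx _ (row_free_trmx_col_mxN1 X).
set P := colproj (augm X).
have P_sym : P^T = P := colproj_sym.
have P_idem : P *m P = P := colproj_idem G_unit.
have Q2P : Q2 *m Q2^T *m P = P by rewrite /P /colproj !mulmxA constraint_Q2_range.
have EtP : Et *m P = - (At *m P) by rewrite /P /colproj !mulmxA Et_augm !mulNmx.
have [lb eq_case] :=
  At_proj_lower_bound P P_sym P_idem (mxtrace_colproj G_unit) Q2P.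
have rest_ge0 := mxtrace_mul_trmx_ge0 (Et *m (1%:M - P)).
rewrite (mxtrace_mul_trmx_proj_split P_sym P_idem) EtP linearN /= mulmxN mulNmx opprK.
split=> [|tr_eq]; first by rewrite (le_trans lb) // lerDl.
have PV1bar : P *m V1bar = 0 by apply: eq_case; lra.
apply: constraint_V1bar_eq_Xn CX _.
by rewrite -(colproj_mul G_unit) -/P mulmxA -{1}P_sym -trmx_mul PV1bar trmx0 mul0mx.
Qed.

Local Notation Et0 := (- (At *m (V2bar *m V2bar^T))).

Lemma Et0_solves_Xn : (A + lsubmx Et0) *m Xn = B + rsubmx Et0.
Proof.
apply/mul_row_col_mxN1_eq0; rewrite -add_row_mx hsubmxK augm_Xn mulmxDl mulNmx.
rewrite -[At *m _ *m _]mulmxA -[V2bar *m V2bar^T *m _]mulmxA.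
by rewrite [V2bar^T *m (V2bar *m _)]mulmxA V2barT_V2bar mul1mx subrr.
Qed.

Lemma mxtrace_Et0 : \tr (Et0 *m Et0^T) = S2.
Proof.
rewrite linearN /= mulmxN mulNmx opprK.
have -> : At *m (V2bar *m V2bar^T) =
    U *m diag_mx s *m (V2bar *m (rsubmx (1%:M : 'M[R]_(k + d)))^T)^T.
  rewrite [(V2bar *m _)^T]trmx_mul trmxK !mulmxA svd.
  by rewrite -(mulmxA (U *m diag_mx s)) mulmx_rsub VTV.
rewrite svd_mxtrace_mul_trmx // [(V2bar *m _)^T]trmx_mul trmxK mulmxA.
rewrite -(mulmxA _ V2bar^T) V2barT_V2bar mulmx1.
exact: sum_diag_rsubmx1.
Qed.

Lemma Et0_minimizer : tlse_minimizer A B C D (lsubmx Et0) (rsubmx Et0).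
Proof.
split=> [|E F [X [feas CX]]].
  by exists Xn; split; [exact: Et0_solves_Xn | exact: C_Xn].
have [lb _] := tlse_lower_bound _ _ _ feas CX.
by rewrite hsubmxK !frob_normE mxtrace_Et0 ler_sqrt ?mxtrace_mul_trmx_ge0.
Qed.

Lemma tlse_solution_iff X : tlse_solution A B C D X <-> X = Xn.
Proof.
split=> [[CX [E [F [[_ EF_min] feas]]]] | ->].
  have [lb eq_case] := tlse_lower_bound _ _ _ feas CX.
  apply: eq_case; apply/le_anti; rewrite lb andbT.
  have [Et0_feasible _] := Et0_minimizer; have := EF_min _ _ Et0_feasible.
  by rewrite hsubmxK !frob_normE ler_sqrt ?mxtrace_mul_trmx_ge0 // mxtrace_Et0.
split; first exact: C_Xn.
exists (lsubmx Et0), (rsubmx Et0); split; first exact: Et0_minimizer.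
exact: Et0_solves_Xn.
Qed.

End TotalLeastSquaresEquality.

(* n + d - p is written (n - p) + d (equal since p <= n), k = n - p.
   Qt = [Q1 Q2] : (n+d) x (p + ((n-p)+d)), U : q x ((n-p)+d),
   Sigma = diag_mx s, V : ((n-p)+d) square. *)
Theorem theorem2p1 (R : realType) (p q n d : nat)
  (A : 'M[R]_(q, n)) (B : 'M[R]_(q, d)) (C : 'M[R]_(p, n)) (D : 'M[R]_(p, d))
  (Qt : 'M[R]_(n + d, p + ((n - p) + d)))
  (U : 'M[R]_(q, (n - p) + d)) (s : 'rV[R]_((n - p) + d))
  (V : 'M[R]_((n - p) + d)) :
  (0 < p)%N -> (0 < q)%N -> (0 < n)%N -> (0 < d)%N ->
  (p <= n)%N -> (n + d - p <= q)%N ->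
  \rank C = p ->
  Qt^T *m Qt = 1%:M -> Qt *m Qt^T = 1%:M ->
  ((lsubmx Qt)^T == row_mx C D)%MS ->
  row_mx A B *m rsubmx Qt = U *m diag_mx s *m V^T ->
  U^T *m U = 1%:M ->
  V^T *m V = 1%:M -> V *m V^T = 1%:M ->
  (forall i j : 'I_((n - p) + d), (i <= j)%N -> s 0 j <= s 0 i) ->
  (forall i : 'I_((n - p) + d), 0 <= s 0 i) ->
  (forall i j : 'I_((n - p) + d), (0 < n - p)%N ->
     nat_of_ord i = (n - p).-1 -> nat_of_ord j = (n - p)%N -> s 0 j < s 0 i) ->
  let V1bar := rsubmx Qt *m lsubmx V in
  let V2bar := rsubmx Qt *m rsubmx V in
  let V11 := usubmx V1bar in
  let V21 := dsubmx V1bar in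
  let V12 := usubmx V2bar in
  let V22 := dsubmx V2bar in
  V22 \in unitmx ->
  let Xn := - (V12 *m invmx V22) in
  let Ahat := lsubmx U *m diag_mx (lsubmx s) *m V11^T in
  let Bhat := lsubmx U *m diag_mx (lsubmx s) *m V21^T in
  (forall X : 'M[R]_(n, d), tlse_solution A B C D X <-> X = Xn) /\
  (forall X : 'M[R]_(n, d), (Ahat *m X = Bhat /\ C *m X = D) <-> X = Xn).
Proof.
move=> _ _ _ d_gt0 _ _ _ QtTQt QtQtT Q1_span svd UTU VTV VVT s_decr s_ge0 s_gap.
move=> V1bar V2bar V11 V21 V12 V22 V22_unit Xn Ahat Bhat.
split=> X.
  exact: (tlse_solution_iff d_gt0 QtTQt QtQtT Q1_span svd UTU VTV VVT
    s_decr s_ge0 s_gap V22_unit).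
exact: (Ahat_system_iff d_gt0 QtTQt QtQtT Q1_span UTU VTV VVT
  s_decr s_ge0 s_gap V22_unit).
Qed.
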